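(* Let $A$ be a nontrivial MV-algebra (i.e. $0\ne 1$) and $\operatorname{Der}(A)$ the set of $(\odot,\vee)$-derivations on $A$. Then: (1) $|\operatorname{Der}(A)|=2$ iff $|A|=2$; (2) $|\operatorname{Der}(A)|=5$ iff $|A|=3$; (3) $|\operatorname{Der}(A)|=9$ iff $|A|=4$.
   Context: An MV-algebra is an algebra $(A,\oplus,{}^*,0)$ of type $(2,1,0)$ satisfying: $x\oplus(y\oplus z)=(x\oplus y)\oplus z$, $x\oplus y=y\oplus x$, $x\oplus 0=x$, $x^{**}=x$, $x\oplus 0^*=0^*$, $(x^*\oplus y)^*\oplus y=(y^*\oplus x)^*\oplus x$. Put $1=0^*$ and $x\odot y=(x^*\oplus y^* )^*$. The natural order is $x\le y$ iff $x^*\oplus y=1$, with lattice operations $x\vee y=(x\odot y^* )\oplus y$, $x\wedge y=x\odot(x^*\oplus y)$. A $(\odot,\vee)$-derivation on $A$ is a map $d:A\to A$ with $d(x\odot y)=(d(x)\odot y)\vee(x\odot d(y))$ for all $x,y\in A$. *)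

From Stdlib Require Import Arith.

Record MVAlgebra := {
  mv_carrier :> Type;
  mv_oplus : mv_carrier -> mv_carrier -> mv_carrier;
  mv_star : mv_carrier -> mv_carrier;
  mv_zero : mv_carrier;
  mv_assoc : forall x y z, mv_oplus x (mv_oplus y z) = mv_oplus (mv_oplus x y) z;
  mv_comm : forall x y, mv_oplus x y = mv_oplus y x;
  mv_zero_r : forall x, mv_oplus x mv_zero = x;
  mv_invol : forall x, mv_star (mv_star x) = x;
  mv_absorb : forall x, mv_oplus x (mv_star mv_zero) = mv_star mv_zero;
  mv_luk : forall x y,
    mv_oplus (mv_star (mv_oplus (mv_star x) y)) y
    = mv_oplus (mv_star (mv_oplus (mv_star y) x)) x
}.

Section Ops.
Variable A : MVAlgebra.
Definition mv_one : A := mv_star A (mv_zero A).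
Definition mv_odot (x y : A) : A :=
  mv_star A (mv_oplus A (mv_star A x) (mv_star A y)).
Definition mv_join (x y : A) : A :=
  mv_oplus A (mv_odot x (mv_star A y)) y.
Definition mv_meet (x y : A) : A :=
  mv_odot x (mv_oplus A (mv_star A x) y).
End Ops.

Definition is_derivation (A : MVAlgebra) (d : A -> A) : Prop :=
  forall x y : A, d (mv_odot A x y) = mv_join A (mv_odot A (d x) y) (mv_odot A x (d y)).

Definition has_card (T : Type) (P : T -> Prop) (n : nat) : Prop :=
  exists f : nat -> T,
    (forall i j, i < n -> j < n -> f i = f j -> i = j) /\
    (forall i, i < n -> P (f i)) /\
    (forall x, P x -> exists i, i < n /\ f i = x).


(* For a, b in A, the map [scaled a b] (x |-> a ⊙ x for x <> 1,
   and 1 |-> b) is a (⊙,∨)-derivation whenever b ⊙ y <= a ⊙ y for all y.  The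
   three families [scaled a a], [scaled 1 b] and [scaled a 0] produce, in an
   MV-algebra with k >= 4 distinct elements, 2k pairwise distinct
   derivations.  Hence fewer than ten derivations force |A| <= 4.

   Exact counts for |A| = 2, 3, 4.  An MV-algebra enumerated as
   0, 1, a_2, ..., a_{n-1} is faithfully described by the tables of * and ⊕ on
   {0, ..., n-1}; its derivations correspond bijectively to the self-maps of
   {0, ..., n-1} passing a boolean derivation test.  A computation over all
   candidate tables with n = 2, 3, 4 shows that every table satisfying the
   MV-axioms has exactly 2, 5, 9 derivations respectively.

   The theorem follows: the forward implications are the exact counts, and
   the backward ones combine the lower bound with the uniqueness of
   cardinalities. *)

From Stdlib Require Import Arith Bool List Lia Permutation Classical ClassicalEpsilon FunctionalExtensionality.
Import ListNotations.

Section MVFacts.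
Variable A : MVAlgebra.
Local Notation "x ⊕ y" := (mv_oplus A x y) (at level 50, left associativity).
Local Notation "x ⊙ y" := (mv_odot A x y) (at level 40, left associativity).
Local Notation st := (mv_star A).
Local Notation zero := (mv_zero A).
Local Notation one := (mv_one A).

Definition mv_le (x y : A) : Prop := st x ⊕ y = one.

Lemma oplus_zero_l x : zero ⊕ x = x.
Proof. rewrite mv_comm; apply mv_zero_r. Qed.

Lemma oplus_one_r x : x ⊕ one = one.
Proof. apply mv_absorb. Qed.

Lemma oplus_one_l x : one ⊕ x = one.
Proof. rewrite mv_comm; apply oplus_one_r. Qed.

Lemma star_one : st one = zero.
Proof. apply mv_invol. Qed.

Lemma star_inj x y : st x = st y -> x = y.
Proof. intros E. rewrite <- (mv_invol A x), <- (mv_invol A y), E. reflexivity. Qed.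

(* [x* ⊕ x = 1]: the Łukasiewicz axiom with [y = 1]. *)
Lemma oplus_star_l x : st x ⊕ x = one.
Proof.
  pose proof (mv_luk A x one) as E.
  rewrite !oplus_one_r, star_one, oplus_zero_l in E. congruence.
Qed.

Lemma mv_le_refl x : mv_le x x.
Proof. apply oplus_star_l. Qed.

Lemma mv_le_zero x : mv_le zero x.
Proof. apply oplus_one_l. Qed.

(* Antisymmetry, read off the Łukasiewicz axiom. *)
Lemma mv_le_antisym x y : mv_le x y -> mv_le y x -> x = y.
Proof.
  intros Hxy Hyx. pose proof (mv_luk A x y) as E.
  rewrite Hxy, Hyx, star_one, !oplus_zero_l in E. symmetry; exact E.
Qed.

Lemma odot_comm x y : x ⊙ y = y ⊙ x.
Proof. unfold mv_odot. rewrite mv_comm. reflexivity. Qed.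

Lemma odot_assoc x y z : x ⊙ (y ⊙ z) = x ⊙ y ⊙ z.
Proof. unfold mv_odot. rewrite !mv_invol, mv_assoc. reflexivity. Qed.

Lemma odot_one_r x : x ⊙ one = x.
Proof. unfold mv_odot. rewrite star_one, mv_zero_r, mv_invol. reflexivity. Qed.

Lemma odot_one_l x : one ⊙ x = x.
Proof. rewrite odot_comm; apply odot_one_r. Qed.

Lemma odot_zero_l x : zero ⊙ x = zero.
Proof. unfold mv_odot. fold one. rewrite oplus_one_l. apply star_one. Qed.

Lemma odot_star_r x : x ⊙ st x = zero.
Proof. unfold mv_odot. rewrite mv_invol, oplus_star_l. apply star_one. Qed.

Lemma odot_le_r x y : mv_le (x ⊙ y) y.
Proof. unfold mv_le, mv_odot. rewrite mv_invol, <- mv_assoc, oplus_star_l. apply oplus_one_r. Qed.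

Lemma odot_eq_zero x y : x ⊙ y = zero -> mv_le x (st y).
Proof.
  intros E. unfold mv_le. apply star_inj. unfold mv_odot in E. rewrite E, star_one. reflexivity.
Qed.

Lemma odot_eq_one x y : x ⊙ y = one -> x = one.
Proof.
  intros E. pose proof (odot_le_r y x) as H. rewrite odot_comm, E in H.
  unfold mv_le in H. rewrite star_one, oplus_zero_l in H. exact H.
Qed.

Lemma star_ne_one x : x <> zero -> st x <> one.
Proof. intros Hx E. apply Hx, star_inj. rewrite E. reflexivity. Qed.

Lemma star_ne_zero x : x <> one -> st x <> zero.
Proof. intros Hx E. apply Hx, star_inj. rewrite E, star_one. reflexivity. Qed.

Lemma join_le_r u v : mv_le u v -> mv_join A u v = v.
Proof.
  intros H. unfold mv_join, mv_odot. rewrite mv_invol, H, star_one. apply oplus_zero_l.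
Qed.

Lemma join_le_l u v : mv_le v u -> mv_join A u v = u.
Proof.
  intros H. unfold mv_join, mv_odot. rewrite mv_invol, mv_luk, H, star_one. apply oplus_zero_l.
Qed.

End MVFacts.

Section ScaledDerivations.
Variable A : MVAlgebra.
Local Notation "x ⊙ y" := (mv_odot A x y) (at level 40, left associativity).
Local Notation st := (mv_star A).
Local Notation zero := (mv_zero A).
Local Notation one := (mv_one A).

Definition scaled (a b : A) (x : A) : A :=
  if excluded_middle_informative (x = one) then b else a ⊙ x.

Lemma scaled_top a b : scaled a b one = b.
Proof. unfold scaled. destruct excluded_middle_informative; congruence. Qed.

Lemma scaled_below_top a b x : x <> one -> scaled a b x = a ⊙ x.
Proof. unfold scaled. destruct excluded_middle_informative; congruence. Qed.

(* [scaled a b] is a derivation as soon as [b ⊙ y <= a ⊙ y] for all [y]: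
   only products with the top can reach the top, and there the join
   collapses to one of its arguments. *)
Lemma scaled_derivation a b :
  (forall y, mv_le A (b ⊙ y) (a ⊙ y)) -> is_derivation A (scaled a b).
Proof.
  intros Hab x y.
  destruct (classic (x = one)) as [-> | Hx]; destruct (classic (y = one)) as [-> | Hy].
  - rewrite !odot_one_l, !scaled_top, odot_one_r. symmetry; apply join_le_r, mv_le_refl.
  - rewrite !odot_one_l, scaled_top, !scaled_below_top by exact Hy.
    symmetry; apply join_le_r, Hab.
  - rewrite !odot_one_r, scaled_top, !scaled_below_top by exact Hx.
    symmetry; apply join_le_l. rewrite (odot_comm A x b). apply Hab.
  - assert (Hxy : x ⊙ y <> one) by (intros E; apply Hx, (odot_eq_one A x y), E).
    rewrite !scaled_below_top by assumption.
    rewrite (odot_assoc A x a y), (odot_comm A x a), <- !odot_assoc.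
    symmetry; apply join_le_r, mv_le_refl.
Qed.

Lemma scaled_diag_derivation a : is_derivation A (scaled a a).
Proof. apply scaled_derivation. intros y; apply mv_le_refl. Qed.

Lemma scaled_unit_derivation b : is_derivation A (scaled one b).
Proof. apply scaled_derivation. intros y. rewrite odot_one_l. apply odot_le_r. Qed.

Lemma scaled_bottom_derivation a : is_derivation A (scaled a zero).
Proof. apply scaled_derivation. intros y. rewrite odot_zero_l. apply mv_le_zero. Qed.

(* Distinctness of members of the three families: compare values at the
   top, then at a suitable second point. *)
Lemma scaled_top_inj a b a' b' : scaled a b = scaled a' b' -> b = b'.
Proof. intros E. rewrite <- (scaled_top a b), <- (scaled_top a' b'), E. reflexivity. Qed.

Lemma scaled_diag_ne_unit a b w :
  b <> one -> w <> zero -> w <> one -> scaled a a <> scaled one b.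
Proof.
  intros Hb Hw0 Hw1 E. pose proof (scaled_top_inj _ _ _ _ E) as <-.
  destruct (classic (a = zero)) as [-> | Ha0].
  - apply Hw0. pose proof (f_equal (fun f => f w) E) as Ew; simpl in Ew.
    rewrite !scaled_below_top, odot_zero_l, odot_one_l in Ew by exact Hw1. congruence.
  - pose proof (star_ne_one A a Ha0) as Hsa.
    pose proof (f_equal (fun f => f (st a)) E) as Ea; simpl in Ea.
    rewrite !scaled_below_top, odot_star_r, odot_one_l in Ea by exact Hsa.
    apply (star_ne_zero A a Hb). congruence.
Qed.

Lemma scaled_bottom_ne_diag a b w :
  w <> one -> a ⊙ w <> zero -> scaled a zero <> scaled b b.
Proof.
  intros Hw Haw E. pose proof (scaled_top_inj _ _ _ _ E) as <-.
  pose proof (f_equal (fun f => f w) E) as Ew; simpl in Ew.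
  rewrite !scaled_below_top, odot_zero_l in Ew by exact Hw. contradiction.
Qed.

Lemma scaled_bottom_ne_unit a b :
  a <> zero -> a <> one -> scaled a zero <> scaled one b.
Proof.
  intros Ha0 Ha1 E. pose proof (scaled_top_inj _ _ _ _ E) as <-.
  pose proof (star_ne_one A a Ha0) as Hsa.
  pose proof (f_equal (fun f => f (st a)) E) as Ea; simpl in Ea.
  rewrite !scaled_below_top, odot_star_r, odot_one_l in Ea by exact Hsa.
  apply (star_ne_zero A a Ha1). congruence.
Qed.

Lemma square_zero_fixed x : x ⊙ x = zero -> st x ⊙ st x = zero -> x = st x.
Proof.
  intros E1 E2. apply odot_eq_zero in E1, E2. rewrite mv_invol in E2.
  apply mv_le_antisym; assumption.
Qed.

(* Two distinct elements outside {0, 1} yield a non-trivial [a] whose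
   product with some [w <> 1] is non-zero; this separates [scaled a 0] from
   the zero derivation [scaled 0 0]. *)
Lemma nonzero_product c d : c <> zero -> c <> one -> d <> zero -> d <> one -> c <> d ->
  exists a w, a <> zero /\ a <> one /\ w <> one /\ a ⊙ w <> zero.
Proof.
  intros Hc0 Hc1 Hd0 Hd1 Hcd.
  destruct (classic (c ⊙ c = zero)) as [Ec|Ec]; [|now exists c, c].
  destruct (classic (st c ⊙ st c = zero)) as [Esc|Esc].
  2:{ exists (st c), (st c). auto using star_ne_zero, star_ne_one. }
  destruct (classic (d ⊙ d = zero)) as [Ed|Ed]; [|now exists d, d].
  destruct (classic (st d ⊙ st d = zero)) as [Esd|Esd].
  2:{ exists (st d), (st d). auto using star_ne_zero, star_ne_one. }
  destruct (classic (c ⊙ d = zero)) as [Ecd|Ecd]; [|now exists c, d].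
  exfalso. apply Hcd.
  pose proof (square_zero_fixed c Ec Esc) as Fc. pose proof (square_zero_fixed d Ed Esd) as Fd.
  apply mv_le_antisym.
  - rewrite Fd. apply odot_eq_zero, Ecd.
  - rewrite Fc. apply odot_eq_zero. rewrite odot_comm. exact Ecd.
Qed.

End ScaledDerivations.

Section Cardinality.
Context {T : Type}.

Lemma nth_map_seq {U} (f : nat -> U) n i d : i < n -> nth i (map f (seq 0 n)) d = f i.
Proof.
  intros Hi. rewrite nth_indep with (d' := f 0) by (rewrite length_map, length_seq; exact Hi).
  rewrite map_nth, seq_nth by exact Hi. reflexivity.
Qed.

Lemma has_card_list (P : T -> Prop) n : has_card T P n ->
  exists l, length l = n /\ NoDup l /\ (forall x, P x <-> In x l).
Proof.
  intros [f [Hinj [HP Hsurj]]]. exists (map f (seq 0 n)). repeat split.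
  - now rewrite length_map, length_seq.
  - apply (NoDup_nth _ (f 0)). rewrite length_map, length_seq. intros i j Hi Hj E.
    rewrite !nth_map_seq in E by assumption. auto.
  - intros Hx. destruct (Hsurj x Hx) as [i [Hi <-]]. apply in_map, in_seq. lia.
  - intros Hx. apply in_map_iff in Hx. destruct Hx as [i [<- Hi]].
    apply in_seq in Hi. apply HP. lia.
Qed.

Lemma list_has_card (P : T -> Prop) (l : list T) (d : T) :
  NoDup l -> (forall x, P x <-> In x l) -> has_card T P (length l).
Proof.
  intros Hnd Hl. exists (fun i => nth i l d). repeat split.
  - intros i j Hi Hj E. exact (proj1 (NoDup_nth l d) Hnd i j Hi Hj E).
  - intros i Hi. apply Hl, nth_In, Hi.
  - intros x Hx. apply Hl in Hx. exact (In_nth l x d Hx).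
Qed.

Lemma has_card_ge (P : T -> Prop) m l :
  has_card T P m -> NoDup l -> (forall x, In x l -> P x) -> length l <= m.
Proof.
  intros Hc Hnd Hl. destruct (has_card_list _ _ Hc) as [l' [<- [_ Hl']]].
  apply NoDup_incl_length; [exact Hnd|]. intros x Hx. apply Hl', Hl, Hx.
Qed.

Lemma has_card_unique (P : T -> Prop) m m' : has_card T P m -> has_card T P m' -> m = m'.
Proof.
  intros H H'.
  destruct (has_card_list _ _ H) as [l [<- [Hnd Hl]]].
  destruct (has_card_list _ _ H') as [l' [<- [Hnd' Hl']]].
  apply Nat.le_antisymm; eapply has_card_ge; eauto; intros x Hx; [apply Hl | apply Hl']; exact Hx.
Qed.

Lemma small_or_extend (d : T) (s : list T) k : NoDup s ->
  (exists j, j < length s + k /\ has_card T (fun _ => True) j) \/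
  (exists r, length r = k /\ NoDup (r ++ s)).
Proof.
  intros Hs. induction k as [|k [[j [Hj Hc]] | [r [Hr Hnd]]]].
  - right. exists []. split; [reflexivity | exact Hs].
  - left. exists j. split; [lia | exact Hc].
  - destruct (classic (forall x, In x (r ++ s))) as [Hfull | Hnot].
    + left. exists (length (r ++ s)). split.
      * rewrite length_app. lia.
      * apply (list_has_card _ _ d); [exact Hnd | intros x; split; auto].
    + apply not_all_ex_not in Hnot. destruct Hnot as [x Hx].
      right. exists (x :: r). split; [simpl; lia|]. constructor; assumption.
Qed.

End Cardinality.

Section LowerBound.
Variable A : MVAlgebra.
Local Notation zero := (mv_zero A).
Local Notation one := (mv_one A).

(* With [k >= 4] distinct elements [0, 1, c, d, r...], the derivations
   [scaled x x] (x any of them), [scaled 1 b] (b <> 1 among them) and one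
   [scaled a 0] are pairwise distinct: [A] has at least [2k] derivations. *)
Lemma derivations_lower_bound c d r m :
  NoDup (zero :: one :: c :: d :: r) -> has_card (A -> A) (is_derivation A) m ->
  2 * (4 + length r) <= m.
Proof.
  intros Hnd Hm.
  pose proof Hnd as Hz. apply NoDup_cons_iff in Hz as [Hz Ho].
  apply NoDup_cons_iff in Ho as [Ho Hc]. apply NoDup_cons_iff in Hc as [Hc _].
  simpl in Hz, Ho, Hc.
  assert (Hc0 : c <> zero) by tauto. assert (Hc1 : c <> one) by tauto.
  assert (Hd0 : d <> zero) by tauto. assert (Hd1 : d <> one) by tauto.
  assert (Hcd : c <> d) by (intros ->; tauto).
  destruct (nonzero_product A c d Hc0 Hc1 Hd0 Hd1 Hcd) as [a [w [Ha0 [Ha1 [Hw Haw]]]]].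
  (* the possible values at the top of [scaled 1 b]: everything but 1 *)
  destruct (NoDup_remove [zero] (c :: d :: r) one Hnd) as [Htops Hone].
  set (tops := [zero] ++ c :: d :: r) in *.
  set (diag := map (fun x => scaled A x x) (zero :: one :: c :: d :: r)).
  set (units := map (scaled A one) tops).
  assert (Hlen : length (diag ++ units ++ [scaled A a zero]) = 2 * (4 + length r))
    by (unfold diag, units, tops; rewrite !length_app, !length_map; simpl; lia).
  rewrite <- Hlen. apply (has_card_ge _ _ _ Hm).
  - apply NoDup_app.
    + apply FinFun.Injective_map_NoDup; [|exact Hnd].
      intros x y E. exact (scaled_top_inj A _ _ _ _ E).
    + apply NoDup_app.
      * apply FinFun.Injective_map_NoDup; [|exact Htops].
        intros x y E. exact (scaled_top_inj A _ _ _ _ E).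
      * repeat constructor. intros [].
      * intros f Hf [<- | []]. apply in_map_iff in Hf as [b [E _]].
        exact (scaled_bottom_ne_unit A a b Ha0 Ha1 (eq_sym E)).
    + intros f Hf Hrest. apply in_map_iff in Hf as [x [<- _]].
      apply in_app_iff in Hrest as [Hu | [E | []]].
      * apply in_map_iff in Hu as [b [E Hb]].
        apply (scaled_diag_ne_unit A x b c); [intros ->; contradiction | exact Hc0 | exact Hc1 |].
        symmetry; exact E.
      * exact (scaled_bottom_ne_diag A a x w Hw Haw E).
  - intros f Hf. apply in_app_iff in Hf as [Hf | Hf]; [|apply in_app_iff in Hf as [Hf | [<- | []]]].
    + apply in_map_iff in Hf as [x [<- _]]. apply scaled_diag_derivation.
    + apply in_map_iff in Hf as [b [<- _]]. apply scaled_unit_derivation.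
    + apply scaled_bottom_derivation.
Qed.

End LowerBound.

Fixpoint tuples {T : Type} (c : list T) (m : nat) : list (list T) :=
  match m with
  | 0 => [[]]
  | S m => flat_map (fun x => map (cons x) (tuples c m)) c
  end.

Lemma in_tuples {T : Type} (c : list T) m v : In v (tuples c m) <-> length v = m /\ (forall x, In x v -> In x c).
Proof.
  revert v. induction m as [|m IH]; intros v; simpl.
  - split.
    + intros [<- | []]. split; [reflexivity | intros x []].
    + intros [Hl _]. left. destruct v; [reflexivity | discriminate].
  - rewrite in_flat_map. split.
    + intros [x [Hx Hv]]. apply in_map_iff in Hv as [w [<- Hw]]. apply IH in Hw as [Hl Hw].
      split; [simpl; lia|]. intros y [<- | Hy]; auto.
    + intros [Hl Hv]. destruct v as [|x w]; [discriminate|]. exists x. split; [apply Hv; now left|].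
      apply in_map, IH. split; [simpl in Hl; lia|]. intros y Hy. apply Hv. now right.
Qed.

Lemma NoDup_prefix_all {T : Type} (c : list T) (ts : list (list T)) :
  NoDup c -> NoDup ts -> NoDup (flat_map (fun x => map (cons x) ts) c).
Proof.
  intros Hc Hts. induction c as [|x c IHc]; simpl; [constructor|].
  apply NoDup_cons_iff in Hc as [Hx Hc]. apply NoDup_app.
  - apply FinFun.Injective_map_NoDup; [intros u v E; injection E; auto | exact Hts].
  - exact (IHc Hc).
  - intros v Hv Hv'. apply in_map_iff in Hv as [u [<- _]].
    apply in_flat_map in Hv' as [y [Hy Hv']]. apply in_map_iff in Hv' as [u' [E _]].
    injection E as -> _. contradiction.
Qed.

Lemma NoDup_tuples {T : Type} (c : list T) m : NoDup c -> NoDup (tuples c m).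
Proof.
  intros Hc. induction m as [|m IH]; simpl.
  - repeat constructor. intros [].
  - exact (NoDup_prefix_all c _ Hc IH).
Qed.

Definition all_below (n : nat) (f : nat -> bool) : bool := forallb f (seq 0 n).

Lemma all_below_spec n f : all_below n f = true <-> forall i, i < n -> f i = true.
Proof.
  unfold all_below. rewrite forallb_forall. split.
  - intros H i Hi. apply H, in_seq. lia.
  - intros H i Hi. apply in_seq in Hi. apply H. lia.
Qed.

(* An MV-algebra on [{0, ..., n-1}] given by the tables [St] of [*] and
   [Pl] of [⊕], with zero coded by [0]. *)
Section Tables.
Variables (n : nat) (St : nat -> nat) (Pl : nat -> nat -> nat).

Definition table_odot (i j : nat) : nat := St (Pl (St i) (St j)).
Definition table_join (i j : nat) : nat := Pl (table_odot i (St j)) j.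

Definition is_mv_table : bool :=
  all_below n (fun i =>
    (St i <? n) && (St (St i) =? i) && (Pl i 0 =? i) && (Pl i (St 0) =? St 0) &&
    all_below n (fun j =>
      (Pl i j <? n) && (Pl i j =? Pl j i) &&
      (Pl (St (Pl (St i) j)) j =? Pl (St (Pl (St j) i)) i) &&
      all_below n (fun k => Pl i (Pl j k) =? Pl (Pl i j) k))).

Definition is_der_table (t : list nat) : bool :=
  all_below n (fun i => all_below n (fun j =>
    nth (table_odot i j) t 0 =?
      table_join (table_odot (nth i t 0) j) (table_odot i (nth j t 0)))).

Definition der_tables : list (list nat) := filter is_der_table (tuples (seq 0 n) n).

End Tables.

(* Since [0] and [1] are coded by [0] and [1], an MV-algebra table is
   determined by the stars of [2, ..., n-1] and the sums of pairs of them;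
   a [code] lists these values. *)
Definition code : Type := (list nat * list (list nat))%type.

Definition code_star (v : code) (i : nat) : nat :=
  match i with 0 => 1 | 1 => 0 | S (S a) => nth a (fst v) 0 end.

Definition code_plus (v : code) (i j : nat) : nat :=
  match i, j with
  | 0, _ => j | _, 0 => i | 1, _ => 1 | _, 1 => 1
  | S (S a), S (S b) => nth b (nth a (snd v) []) 0
  end.

Definition codes (n : nat) : list code :=
  list_prod (tuples (seq 0 n) (n - 2)) (tuples (tuples (seq 0 n) (n - 2)) (n - 2)).

Definition counts_derivations (n m : nat) : bool :=
  forallb (fun v =>
    if is_mv_table n (code_star v) (code_plus v)
    then length (der_tables n (code_star v) (code_plus v)) =? m
    else true) (codes n).

Lemma counts_2 : counts_derivations 2 2 = true.
Proof. vm_compute. reflexivity. Qed.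

Lemma counts_3 : counts_derivations 3 5 = true.
Proof. vm_compute. reflexivity. Qed.

Lemma counts_4 : counts_derivations 4 9 = true.
Proof. vm_compute. reflexivity. Qed.

Section Reflection.
Variables (A : MVAlgebra) (rest : list A) (n : nat).
Local Notation "x ⊕ y" := (mv_oplus A x y) (at level 50, left associativity).
Local Notation "x ⊙ y" := (mv_odot A x y) (at level 40, left associativity).
Local Notation st := (mv_star A).
Local Notation zero := (mv_zero A).
Local Notation one := (mv_one A).
Local Notation enum := (zero :: one :: rest).
Hypothesis enum_length : length enum = n.
Hypothesis enum_nodup : NoDup enum.
Hypothesis enum_full : forall x : A, In x enum.

Definition elem (i : nat) : A := nth i enum zero.

Lemma elem_surj x : exists i, i < n /\ elem i = x.
Proof. rewrite <- enum_length. apply In_nth, enum_full. Qed.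

Definition index (x : A) : nat := proj1_sig (constructive_indefinite_description _ (elem_surj x)).

Lemma index_lt x : index x < n.
Proof. unfold index. exact (proj1 (proj2_sig (constructive_indefinite_description _ (elem_surj x)))). Qed.

Lemma elem_index x : elem (index x) = x.
Proof. unfold index. exact (proj2 (proj2_sig (constructive_indefinite_description _ (elem_surj x)))). Qed.

Lemma elem_inj i j : i < n -> j < n -> elem i = elem j -> i = j.
Proof. rewrite <- enum_length. apply NoDup_nth, enum_nodup. Qed.

Lemma index_elem i : i < n -> index (elem i) = i.
Proof. intros Hi. apply elem_inj; [apply index_lt | exact Hi | apply elem_index]. Qed.

Definition represents (S : nat -> nat) (P : nat -> nat -> nat) : Prop :=
  (forall i, i < n -> S i < n /\ elem (S i) = st (elem i)) /\
  (forall i j, i < n -> j < n -> P i j < n /\ elem (P i j) = elem i ⊕ elem j).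

Section Represented.
Variables (S : nat -> nat) (P : nat -> nat -> nat).
Hypothesis rep : represents S P.

Lemma represents_mv_table : is_mv_table n S P = true.
Proof.
  destruct rep as [HS HP].
  assert (H0 : 0 < n) by (rewrite <- enum_length; simpl; lia).
  destruct (HS 0 H0) as [HS0 ES0].
  apply all_below_spec. intros i Hi.
  destruct (HS i Hi) as [HSi ESi]. destruct (HS _ HSi) as [HSSi ESSi].
  destruct (HP i 0 Hi H0) as [_ EP0]. destruct (HP i _ Hi HS0) as [_ EP1].
  repeat (apply andb_true_intro; split).
  - apply Nat.ltb_lt, HSi.
  - apply Nat.eqb_eq, elem_inj; [exact HSSi | exact Hi|]. rewrite ESSi, ESi. apply mv_invol.
  - apply Nat.eqb_eq, elem_inj; [apply HP; assumption | exact Hi|]. rewrite EP0. apply mv_zero_r.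
  - apply Nat.eqb_eq, elem_inj; [apply HP; assumption | exact HS0|]. rewrite EP1, ES0. apply mv_absorb.
  - apply all_below_spec. intros j Hj.
    destruct (HS j Hj) as [HSj ESj].
    destruct (HP i j Hi Hj) as [HPij EPij]. destruct (HP j i Hj Hi) as [HPji EPji].
    destruct (HP _ _ HSi Hj) as [H1 E1]. destruct (HP _ _ HSj Hi) as [H2 E2].
    destruct (HS _ H1) as [H3 E3]. destruct (HS _ H2) as [H4 E4].
    destruct (HP _ _ H3 Hj) as [H5 E5]. destruct (HP _ _ H4 Hi) as [H6 E6].
    repeat (apply andb_true_intro; split).
    + apply Nat.ltb_lt, HPij.
    + apply Nat.eqb_eq, elem_inj; [exact HPij | exact HPji|]. rewrite EPij, EPji. apply mv_comm.
    + apply Nat.eqb_eq, elem_inj; [exact H5 | exact H6|].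
      rewrite E5, E6, E3, E4, E1, E2, ESi, ESj. apply mv_luk.
    + apply all_below_spec. intros k Hk. apply Nat.eqb_eq.
      destruct (HP j k Hj Hk) as [HPjk EPjk].
      destruct (HP _ _ Hi HPjk) as [H7 E7]. destruct (HP _ _ HPij Hk) as [H8 E8].
      apply elem_inj; [exact H7 | exact H8|]. rewrite E7, E8, EPjk, EPij. apply mv_assoc.
Qed.

Lemma represents_odot i j : i < n -> j < n ->
  table_odot S P i j < n /\ elem (table_odot S P i j) = elem i ⊙ elem j.
Proof.
  intros Hi Hj. destruct rep as [HS HP]. unfold table_odot, mv_odot.
  destruct (HS i Hi) as [HSi ESi]. destruct (HS j Hj) as [HSj ESj].
  destruct (HP _ _ HSi HSj) as [H1 E1]. destruct (HS _ H1) as [H2 E2].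
  split; [exact H2|]. rewrite E2, E1, ESi, ESj. reflexivity.
Qed.

Lemma represents_join i j : i < n -> j < n ->
  table_join S P i j < n /\ elem (table_join S P i j) = mv_join A (elem i) (elem j).
Proof.
  intros Hi Hj. destruct rep as [HS HP]. unfold table_join, mv_join.
  destruct (HS j Hj) as [HSj ESj].
  destruct (represents_odot i _ Hi HSj) as [H1 E1]. destruct (HP _ _ H1 Hj) as [H2 E2].
  split; [exact H2|]. rewrite E2, E1, ESj. reflexivity.
Qed.

Definition table_map (t : list nat) (x : A) : A := elem (nth (index x) t 0).

Definition table_of (f : A -> A) : list nat := map (fun i => index (f (elem i))) (seq 0 n).

Local Notation is_table t := (In t (tuples (seq 0 n) n)).

Lemma table_entry_lt t i : is_table t -> i < n -> nth i t 0 < n.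
Proof.
  intros Ht Hi. apply in_tuples in Ht as [Hlen Hin].
  apply in_seq with (start := 0), Hin, nth_In. lia.
Qed.

Lemma table_map_elem t i : i < n -> table_map t (elem i) = elem (nth i t 0).
Proof. intros Hi. unfold table_map. rewrite index_elem by exact Hi. reflexivity. Qed.

Lemma table_of_is_table f : is_table (table_of f).
Proof.
  apply in_tuples. unfold table_of. split; [now rewrite length_map, length_seq|].
  intros x Hx. apply in_map_iff in Hx as [i [<- _]]. apply in_seq. pose proof (index_lt (f (elem i))). lia.
Qed.

Lemma table_map_of f : table_map (table_of f) = f.
Proof.
  apply functional_extensionality. intros x. unfold table_map, table_of.
  rewrite nth_map_seq by apply index_lt. rewrite !elem_index. reflexivity.
Qed.

Lemma table_map_inj t t' : is_table t -> is_table t' -> table_map t = table_map t' -> t = t'.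
Proof.
  intros Ht Ht' E.
  pose proof Ht as [Hlen _]%in_tuples. pose proof Ht' as [Hlen' _]%in_tuples.
  apply nth_ext with (d := 0) (d' := 0); [congruence|]. intros i Hi. rewrite Hlen in Hi.
  apply elem_inj; [apply table_entry_lt; assumption .. |].
  rewrite <- !table_map_elem by exact Hi. rewrite E. reflexivity.
Qed.

Lemma is_der_table_spec t : is_table t ->
  is_der_table n S P t = true <-> is_derivation A (table_map t).
Proof.
  intros Ht.
  assert (Hjoin : forall i j, i < n -> j < n ->
    elem (table_join S P (table_odot S P (nth i t 0) j) (table_odot S P i (nth j t 0))) =
    mv_join A (table_map t (elem i) ⊙ elem j) (elem i ⊙ table_map t (elem j))).
  { intros i j Hi Hj. rewrite !table_map_elem by assumption.
    pose proof (table_entry_lt t i Ht Hi) as Hti. pose proof (table_entry_lt t j Ht Hj) as Htj.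
    destruct (represents_odot _ _ Hti Hj) as [H1 E1]. destruct (represents_odot _ _ Hi Htj) as [H2 E2].
    destruct (represents_join _ _ H1 H2) as [_ E3]. rewrite E3, E1, E2. reflexivity. }
  assert (Hlhs : forall i j, i < n -> j < n ->
    elem (nth (table_odot S P i j) t 0) = table_map t (elem i ⊙ elem j)).
  { intros i j Hi Hj. destruct (represents_odot _ _ Hi Hj) as [H1 E1].
    rewrite <- E1, table_map_elem by exact H1. reflexivity. }
  unfold is_der_table. rewrite all_below_spec. split.
  - intros Hder x y. rewrite <- (elem_index x), <- (elem_index y).
    pose proof (index_lt x) as Hx. pose proof (index_lt y) as Hy.
    specialize (Hder _ Hx). rewrite all_below_spec in Hder. specialize (Hder _ Hy).
    apply Nat.eqb_eq in Hder. rewrite <- Hlhs, <- Hjoin, Hder by assumption. reflexivity.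
  - intros Hder i Hi. apply all_below_spec. intros j Hj. apply Nat.eqb_eq.
    destruct (represents_odot _ _ Hi Hj) as [H1 _].
    apply elem_inj.
    + apply table_entry_lt; assumption.
    + apply represents_join; apply represents_odot; try apply table_entry_lt; assumption.
    + rewrite Hlhs, Hjoin by assumption. apply Hder.
Qed.

Lemma represents_der_card : has_card (A -> A) (is_derivation A) (length (der_tables n S P)).
Proof.
  replace (length (der_tables n S P)) with (length (map table_map (der_tables n S P)))
    by apply length_map.
  apply (list_has_card _ _ (fun x => x)).
  - apply NoDup_map_NoDup_ForallPairs.
    + intros t t' Ht Ht'. apply filter_In in Ht as [Ht _], Ht' as [Ht' _].
      apply table_map_inj; assumption.
    + apply NoDup_filter, NoDup_tuples, seq_NoDup.
  - intros f. rewrite in_map_iff. split.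
    + intros Hf. exists (table_of f). split; [apply table_map_of|].
      apply filter_In. split; [apply table_of_is_table|].
      apply is_der_table_spec; [apply table_of_is_table|]. rewrite table_map_of. exact Hf.
    + intros [t [<- Ht]]. apply filter_In in Ht as [Ht Hder].
      apply is_der_table_spec; assumption.
Qed.

End Represented.

Definition code_of : code :=
  (map (fun a => index (st (elem (2 + a)))) (seq 0 (n - 2)),
   map (fun a => map (fun b => index (elem (2 + a) ⊕ elem (2 + b))) (seq 0 (n - 2)))
       (seq 0 (n - 2))).

Lemma code_of_represents : represents (code_star code_of) (code_plus code_of).
Proof.
  assert (H1 : 1 < n) by (rewrite <- enum_length; simpl; lia).
  split.
  - intros [|[|a]] Hi; simpl.
    + split; [exact H1 | reflexivity].
    + split; [lia | symmetry; apply star_one].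
    + rewrite nth_map_seq by lia. split; [apply index_lt | apply elem_index].
  - intros [|[|a]] j Hi Hj.
    + split; [exact Hj | symmetry; apply oplus_zero_l].
    + destruct j as [|[|b]]; (split; [exact H1|]); simpl;
        [symmetry; apply mv_zero_r | symmetry; apply oplus_one_l ..].
    + destruct j as [|[|b]]; simpl.
      * split; [exact Hi | symmetry; apply mv_zero_r].
      * split; [exact H1 | symmetry; apply oplus_one_r].
      * rewrite !nth_map_seq by lia. split; [apply index_lt | apply elem_index].
Qed.

Lemma code_of_in_codes : In code_of (codes n).
Proof.
  assert (Hentry : forall x, In (index x) (seq 0 n)) by (intros x; apply in_seq; pose proof (index_lt x); lia).
  apply in_prod; apply in_tuples; (split; [now rewrite length_map, length_seq|]);
    intros x Hx; apply in_map_iff in Hx as [a [<- _]].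
  - apply Hentry.
  - apply in_tuples. split; [now rewrite length_map, length_seq|].
    intros x Hx. apply in_map_iff in Hx as [b [<- _]]. apply Hentry.
Qed.

End Reflection.

Lemma enumeration_from_card (A : MVAlgebra) n :
  mv_zero A <> mv_one A -> has_card A (fun _ => True) n ->
  exists rest, length (mv_zero A :: mv_one A :: rest) = n /\
    NoDup (mv_zero A :: mv_one A :: rest) /\ forall x, In x (mv_zero A :: mv_one A :: rest).
Proof.
  intros Hnt HA. destruct (has_card_list _ _ HA) as [l [Hlen [Hnd Hl]]].
  destruct (in_split (mv_zero A) l) as [l1 [l2 ->]]; [apply Hl; exact I|].
  assert (Hperm0 : Permutation (l1 ++ mv_zero A :: l2) (mv_zero A :: l1 ++ l2))
    by (symmetry; apply Permutation_middle).
  assert (Hone : In (mv_one A) (l1 ++ l2)).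
  { destruct (Permutation_in _ Hperm0 (proj1 (Hl (mv_one A)) I)) as [E | H]; [congruence | exact H]. }
  destruct (in_split _ _ Hone) as [l3 [l4 E]]. rewrite E in Hperm0.
  assert (Hperm : Permutation (l1 ++ mv_zero A :: l2) (mv_zero A :: mv_one A :: l3 ++ l4)).
  { eapply perm_trans; [exact Hperm0|]. constructor. symmetry; apply Permutation_middle. }
  exists (l3 ++ l4). repeat split.
  - rewrite <- Hlen. symmetry; apply Permutation_length, Hperm.
  - exact (Permutation_NoDup Hperm Hnd).
  - intros x. apply (Permutation_in _ Hperm), Hl. exact I.
Qed.

Lemma der_card_of_size (A : MVAlgebra) n m :
  mv_zero A <> mv_one A -> counts_derivations n m = true ->
  has_card A (fun _ => True) n -> has_card (A -> A) (is_derivation A) m.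
Proof.
  intros Hnt Hcount HA.
  destruct (enumeration_from_card A n Hnt HA) as [rest [Hlen [Hnd Hfull]]].
  pose proof (code_of_represents A rest n Hlen Hfull) as Hrep.
  unfold counts_derivations in Hcount. rewrite forallb_forall in Hcount.
  specialize (Hcount _ (code_of_in_codes A rest n Hlen Hfull)).
  rewrite (represents_mv_table A rest n Hlen Hnd _ _ Hrep), Nat.eqb_eq in Hcount.
  rewrite <- Hcount. exact (represents_der_card A rest n Hlen Hnd Hfull _ _ Hrep).
Qed.

(* Backward direction: fewer than ten derivations forces at most four
   elements, and then the counts 2, 5, 9 identify the size. *)
Lemma size_of_der_card (A : MVAlgebra) m :
  mv_zero A <> mv_one A -> has_card (A -> A) (is_derivation A) m -> m < 10 ->
  (m = 2 /\ has_card A (fun _ => True) 2) \/ (m = 5 /\ has_card A (fun _ => True) 3) \/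
  (m = 9 /\ has_card A (fun _ => True) 4).
Proof.
  intros Hnt Hm Hm10.
  assert (H01 : NoDup [mv_zero A; mv_one A]) by (repeat constructor; simpl; intuition).
  destruct (small_or_extend (mv_zero A) _ 3 H01) as [[j [Hj HA]] | [r [Hr Hnd]]].
  - assert (Hj2 : 2 <= j).
    { apply (has_card_ge _ _ _ HA H01). intros; exact I. }
    assert (Hsize : j = 2 \/ j = 3 \/ j = 4) by (simpl in Hj; lia).
    destruct Hsize as [-> | [-> | ->]]; [left | right; left | right; right]; split; try exact HA;
      eapply has_card_unique; try exact Hm; eapply der_card_of_size;
      eauto using counts_2, counts_3, counts_4.
  - exfalso. destruct r as [|c [|d [|e [|]]]]; try discriminate.
    apply (Permutation_NoDup (Permutation_app_comm _ _)) in Hnd.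
    pose proof (derivations_lower_bound A c d [e] m Hnd Hm). simpl in *. lia.
Qed.

Theorem proposition3p16 (A : MVAlgebra) (Hnontriv : mv_zero A <> mv_one A) :
  (has_card (A -> A) (is_derivation A) 2 <-> has_card A (fun _ => True) 2) /\
  (has_card (A -> A) (is_derivation A) 5 <-> has_card A (fun _ => True) 3) /\
  (has_card (A -> A) (is_derivation A) 9 <-> has_card A (fun _ => True) 4).
Proof.
  pose proof (der_card_of_size A 2 2 Hnontriv counts_2) as Hsize2.
  pose proof (der_card_of_size A 3 5 Hnontriv counts_3) as Hsize3.
  pose proof (der_card_of_size A 4 9 Hnontriv counts_4) as Hsize4.
  repeat split; try assumption; intros Hder;
    destruct (size_of_der_card A _ Hnontriv Hder ltac:(lia)) as [[E HA] | [[E HA] | [E HA]]];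
    first [exact HA | discriminate E].
Qed.
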